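(* For every deterministic parity automaton $\mathcal{A}=(Q,Q_0,\delta,\mu)$ with $m$ colors over a finite alphabet $\Sigma$, every bound $n\in\mathbb{N}$ and every $m'$ with $0<m'<m$, there is a deterministic parity automaton $\mathcal{A}'$ with $m'$ colors and $(n\cdot|Q|+1)\cdot|Q|\cdot(m-m'+2)$ states such that $L(\mathcal{A}')\subseteq L(\mathcal{A})$ and $L_n(L(\mathcal{A}'))=L_n(L(\mathcal{A}))$.
   Context: A lasso of length $n$ is a pair $(u,v)$ with $u\in\Sigma^*$, $v\in\Sigma^+$, $|u\cdot v|=n$, inducing $u\cdot v^\omega$. For $\psi\subseteq\Sigma^\omega$, $L_n(\psi)=\{u\cdot v^\omega \in \psi \mid u\in\Sigma^*, v\in\Sigma^+, |u\cdot v|=n\}$. A parity automaton is $(Q,Q_0,\delta,\mu)$ with finite $Q$, $Q_0\subseteq Q$, $\delta:Q\times\Sigma\to\mathcal{P}(Q)$, coloring $\mu$; ''with $m$ colors'' means $\mu:Q\to\{0,\dots,m-1\}$. A run on $\alpha_1\alpha_2\cdots$ is $q_0q_1\cdots$ with $q_0\in Q_0$ and $q_{i+1}\in\delta(q_i,\alpha_{i+1})$; it is accepting if the highest color occurring infinitely often along it is even; $L(\cdot)$ is the set of words with an accepting run. Deterministic means $|Q_0|=1$ and $|\delta(q,\alpha)|\le1$ for all $q,\alpha$ (missing successors allowed). *)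

From mathcomp Require Import all_boot.
Set Implicit Arguments.

(* Infinite words over Sigma: alpha_1 alpha_2 ... is represented by w : nat -> Sigma,
   with w i = alpha_(i+1). *)
Definition oword (Sigma : Type) := nat -> Sigma.

Record parity_aut (Sigma : finType) (m : nat) := ParityAut {
  pa_state :> finType;
  pa_init  : {set pa_state};
  pa_delta : pa_state -> Sigma -> {set pa_state};
  pa_color : pa_state -> 'I_m
}.
Arguments pa_init {Sigma m} p.
Arguments pa_delta {Sigma m} p _ _.
Arguments pa_color {Sigma m} p _.

(* Deterministic: |Q0| = 1 and |delta(q,a)| <= 1 (missing successors allowed). *)
Definition deterministic {Sigma : finType} (m : nat) (A : parity_aut Sigma m) : Prop :=
  #|pa_init A| = 1 /\ forall (q : pa_state A) (a : Sigma), #|pa_delta A q a| <= 1.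

Definition is_run {Sigma : finType} (m : nat) (A : parity_aut Sigma m)
  (w : oword Sigma) (r : nat -> pa_state A) : Prop :=
  r 0 \in pa_init A /\ forall i, r i.+1 \in pa_delta A (r i) (w i).

Definition accepting_run {Sigma : finType} (m : nat) (A : parity_aut Sigma m)
  (r : nat -> pa_state A) : Prop :=
  exists c : nat, ~~ odd c /\
    (forall N, exists i, N <= i /\ nat_of_ord (pa_color A (r i)) = c) /\
    (exists N, forall i, N <= i -> nat_of_ord (pa_color A (r i)) <= c).

Definition lang {Sigma : finType} (m : nat) (A : parity_aut Sigma m) (w : oword Sigma) : Prop :=
  exists r, is_run A w r /\ accepting_run A r.

Definition is_lasso_word {Sigma : finType} (u v : seq Sigma) (w : oword Sigma) : Prop :=
  forall i, w i = (if i < size u then nth (w i) u i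
                   else nth (w i) v ((i - size u) %% size v)).

Definition lasso_lang {Sigma : finType} (n : nat) (psi : oword Sigma -> Prop)
  (w : oword Sigma) : Prop :=
  psi w /\ exists (u v : seq Sigma),
    0 < size v /\ size (u ++ v) = n /\ is_lasso_word u v w.

From mathcomp Require Import all_boot zify.
From Stdlib Require Import Classical.

Set Implicit Arguments.
Unset Strict Implicit.
Unset Printing Implicit Defensive.

(* The automaton A' runs A while counting positions modulo K + 1, where K = n|Q|, and
   remembering the largest colour <= s seen in the current block of K + 1 positions, s being
   the least even number >= m - m'. Colours above s are shifted down by s, which preserves
   their parity; a block whose low maximum is odd emits colour 1 (or, if m' = 1, kills the
   run), and all other positions emit 0. An accepting run of A' thus projects to an accepting
   run of A: an odd low limsup would produce infinitely many odd blocks. Conversely, on a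
   lasso u v^omega with |uv| = n the deterministic run of A is periodic from position K on
   with period at most K, so every block after the first sees a whole period and has the even
   limsup as its low maximum; the first block is masked by a sentinel value. *)

Definition limsup (f : nat -> nat) (c : nat) : Prop :=
  (forall N, exists i, N <= i /\ f i = c) /\ (exists N, forall i, N <= i -> f i <= c).

Lemma limsup_uniq f c d : limsup f c -> limsup f d -> c = d.
Proof.
move=> [often_c [Nc le_c]] [often_d [Nd le_d]].
have [i [Ni fi]] := often_c Nd; have [j [Nj fj]] := often_d Nc.
by have := le_d i Ni; have := le_c j Nj; lia.
Qed.

Lemma eq_limsup f g c : f =1 g -> limsup f c -> limsup g c.
Proof.
move=> fg [often [N le_c]]; split.
  by move=> M; have [i [Mi fi]] := often M; exists i; rewrite -fg.
by exists N => i Ni; rewrite -fg; apply: le_c.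
Qed.

Lemma limsup_exists B f : (forall i, f i < B) -> exists c, limsup f c.
Proof.
elim: B f => [|B IH] f f_lt; first by have := f_lt 0.
case: (classic (forall N, exists i, N <= i /\ f i = B)) => [often | /not_all_ex_not[N rare]].
  by exists B; split => //; exists 0 => i _; have := f_lt i.
have f_lt_B i : f (i + N) < B.
  have := f_lt (i + N); rewrite ltnS leq_eqVlt => /orP[/eqP fi|//].
  by case: rare; exists (i + N); rewrite leq_addl.
have [c [often [M le_c]]] := IH _ f_lt_B.
exists c; split.
  by move=> L; have [i [Li fi]] := often L; exists (i + N); split=> //; lia.
by exists (M + N) => i MNi; rewrite -(subnK (leq_trans (leq_addl M N) MNi)) le_c //; lia.
Qed.

Definition periodic_from (T : Type) (B P : nat) (f : nat -> T) : Prop :=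
  forall i, B <= i -> f (i + P) = f i.

Section Periodic.
Variables (T : Type) (B P : nat) (f : nat -> T).
Hypothesis f_periodic : periodic_from B P f.

Lemma periodic_fromM k i : B <= i -> f (i + k * P) = f i.
Proof.
elim: k => [|k IH] Bi; first by rewrite addn0.
by rewrite mulSnr addnA f_periodic ?IH //; lia.
Qed.

Lemma periodic_from_le B' : B <= B' -> periodic_from B' P f.
Proof. by move=> BB' i B'i; apply: f_periodic; apply: leq_trans B'i. Qed.

Lemma periodic_window i a : 0 < P -> B <= i -> B <= a ->
  exists2 j, a <= j < a + P & f j = f i.
Proof.
move=> P_gt0 Bi Ba; pose y := i + a * P.
have a_le_y : a <= y by rewrite /y; nia.
exists (a + (y - a) %% P); first by have := ltn_pmod (y - a) P_gt0; lia.
rewrite -(periodic_fromM a Bi) -/y [in RHS](_ : y = a + (y - a) %% P + (y - a) %/ P * P).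
  by rewrite periodic_fromM //; lia.
by have := divn_eq (y - a) P; lia.
Qed.

End Periodic.

Lemma periodic_limsup B P f d : 0 < P -> periodic_from B P f -> limsup f d ->
  (forall i, B <= i -> f i <= d) /\
  (forall a, B <= a -> exists2 j, a <= j < a + P & f j = d).
Proof.
move=> P_gt0 fP [often [N le_d]]; split.
  by move=> i Bi; rewrite -(periodic_fromM fP N Bi) le_d //; nia.
have [j [Bj fj]] := often B.
by move=> a Ba; rewrite -fj; apply: (periodic_window fP).
Qed.

Lemma lasso_word_periodic (Sigma : finType) (u v : seq Sigma) w :
  0 < size v -> is_lasso_word u v w -> periodic_from (size u) (size v) w.
Proof.
move=> v_gt0 lasso i ui; rewrite (lasso i) (lasso (i + size v)).
rewrite ltnNge (leq_trans ui (leq_addr _ _)) ltnNge ui /=.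
rewrite -addnBAC // modnDr; apply: set_nth_default; exact: ltn_pmod.
Qed.

Section Deterministic.
Variables (Sigma : finType) (m : nat) (A : parity_aut Sigma m).
Hypothesis A_det : deterministic A.

Lemma deterministic_succ q a q1 q2 :
  q1 \in pa_delta A q a -> q2 \in pa_delta A q a -> q1 = q2.
Proof. by move=> q1_succ q2_succ; apply: (card_le1_eqP (A_det.2 q a)). Qed.

Lemma deterministic_pick q a q' :
  q' \in pa_delta A q a -> [pick x in pa_delta A q a] = Some q'.
Proof.
move=> q'_succ; case: pickP => [x x_succ | none].
  by rewrite (deterministic_succ x_succ q'_succ).
by have := none q'; rewrite q'_succ.
Qed.

Lemma det_run_periodic w r i P : is_run A w r ->
  r (i + P) = r i -> periodic_from i P w -> periodic_from i P r.
Proof.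
move=> [_ run] rP wP j ij; rewrite -(subnKC ij).
elim: (j - i) => [|k IH]; first by rewrite addn0.
rewrite (_ : i + k.+1 + P = (i + k + P).+1) ?addnS; last by lia.
apply: (deterministic_succ (run _)).
by rewrite IH wP ?leq_addr //; apply: run.
Qed.

Lemma det_run_lasso_periodic u v w r : is_run A w r -> 0 < size v -> is_lasso_word u v w ->
  exists2 P, 0 < P <= size (u ++ v) * #|A| & periodic_from (size (u ++ v) * #|A|) P r.
Proof.
move=> run v_gt0 lasso; have wP := lasso_word_periodic v_gt0 lasso.
(* Two of the states reached after u v^j, j <= |Q|, coincide. *)
rewrite size_cat; pose f (j : 'I_#|A|.+1) := r (size u + j * size v).
have /injectivePn [x [y x_neq_y fxy]] : ~~ injectiveb f.
  by apply/injectiveP => /leq_card; rewrite card_ord ltnn.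
have [i [j [lt_ij j_le fij]]] : exists i j,
    [/\ i < j, j <= #|A| & r (size u + j * size v) = r (size u + i * size v)].
  have x_le := ltn_ord x; have y_le := ltn_ord y; rewrite ltnS in x_le y_le.
  case: (ltngtP x y) => [lt_xy | lt_yx | /val_inj eq_xy]; first by exists x, y.
    by exists y, x.
  by rewrite eq_xy eqxx in x_neq_y.
have Q_gt0 : 0 < #|A| by apply: leq_trans j_le; lia.
have mul_le k : k <= #|A| -> k * size v <= #|A| * size v.
  by move=> k_le; rewrite leq_mul2r k_le orbT.
have start_le : size u + i * size v <= (size u + size v) * #|A|.
  by rewrite mulnDl [size v * _]mulnC leq_add ?leq_pmulr ?mul_le // (ltnW (leq_trans lt_ij j_le)).
exists ((j - i) * size v).
  rewrite muln_gt0 subn_gt0 lt_ij v_gt0 (leq_trans (mul_le _ (leq_trans (leq_subr _ _) j_le))) //.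
  by rewrite mulnDl [size v * _]mulnC leq_addl.
apply: (periodic_from_le _ start_le); apply: (det_run_periodic run).
  by rewrite -addnA -mulnDl (subnKC (ltnW lt_ij)).
by move=> l il; rewrite (periodic_fromM wP) // (leq_trans _ il) ?leq_addr.
Qed.

End Deterministic.

Section Tracker.
Variables (K h k : nat).
Local Notation s := (h + odd h).

Lemma even_s : ~~ odd s.
Proof. by rewrite oddD; case: (odd h). Qed.

Lemma s_le : s <= h.+1.
Proof. by rewrite -addn1 leq_add2l leq_b1. Qed.

Lemma odd_le_s d : odd d -> d <= s -> d <= h.
Proof.
move=> odd_d d_le; have d_neq : d != s by apply: contraTneq odd_d => ->; apply: even_s.
by have := s_le; have := ltn_neqAle d s; rewrite d_neq d_le /=; lia.
Qed.

Definition low (c : nat) : nat := if c <= s then c else 0.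

Definition next_low (t x c : nat) : nat := if t == K then low c else maxn x (low c).

Definition odd_block (t x : nat) : bool := [&& t == K, odd x & x <= h].

(* The value h.+1 is a sentinel for the first block, where no odd block may be reported. *)
Fixpoint low_track (c : nat -> nat) (i : nat) : nat :=
  if i is j.+1 then next_low (j %% K.+1) (low_track c j) (c i) else h.+1.

Definition odd_block_at (c : nat -> nat) (i : nat) : bool :=
  odd_block (i %% K.+1) (low_track c i).

Lemma low_trackS c i : low_track c i.+1 = next_low (i %% K.+1) (low_track c i) (c i.+1).
Proof. by []. Qed.

Lemma low_le c : low c <= s.
Proof. by rewrite /low; case: ifP. Qed.

Lemma next_low_lt t x c : x < h.+2 -> next_low t x c < h.+2.
Proof.
have low_c := leq_trans (low_le c) s_le.
by rewrite /next_low; case: ifP => _; rewrite ?gtn_max => // ->.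
Qed.

Lemma low_track_lt c i : low_track c i < h.+2.
Proof. by elim: i => //= i IH; apply: next_low_lt. Qed.

Lemma low_track_first_block c i : i <= K -> low_track c i = h.+1.
Proof.
elim: i => //= i IH iK; rewrite IH ?(ltnW iK) // /next_low modn_small 1?ltnW // (ltn_eqF iK).
by apply/maxn_idPl; apply: leq_trans (low_le _) s_le.
Qed.

Lemma low_track_block c j l : 0 < j -> l <= K ->
  low_track c (j * K.+1 + l) = \max_(j * K.+1 <= i < (j * K.+1 + l).+1) low (c i).
Proof.
case: j => // j _; elim: l => [|l IH] lK.
  rewrite addn0 big_nat1 mulSnr addnS low_trackS /next_low.
  by rewrite modnMDl modn_small // eqxx.
rewrite addnS low_trackS IH 1?ltnW // [RHS]big_nat_recr /=; last exact/leqW/leq_addr.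
by rewrite /next_low modnMDl modn_small 1?ltnW // (ltn_eqF lK).
Qed.

Lemma low_track_block_end c j d : 0 < j -> d <= s ->
  (forall i, j * K.+1 <= i < j.+1 * K.+1 -> c i <= d) ->
  (exists2 i, j * K.+1 <= i < j.+1 * K.+1 & c i = d) ->
  low_track c (j * K.+1 + K) = d.
Proof.
move=> j_gt0 d_le le_d [i i_in ci].
have low_id l : j * K.+1 <= l < j.+1 * K.+1 -> low (c l) = c l.
  by move=> l_in; rewrite /low (leq_trans (le_d l l_in) d_le).
have block_eq : (j * K.+1 + K).+1 = j.+1 * K.+1 by rewrite mulSnr addnS.
rewrite low_track_block // block_eq; apply/eqP; rewrite eqn_leq; apply/andP; split.
  apply/bigmax_leqP_seq => l; rewrite mem_index_iota => l_in _.
  by rewrite low_id ?le_d.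
by rewrite -ci -low_id //; apply: leq_bigmax_seq; rewrite ?mem_index_iota.
Qed.

Lemma odd_block_often c d N0 : odd d -> d <= s ->
  (forall i, N0 <= i -> c i <= d) -> (forall N, exists i, N <= i /\ c i = d) ->
  forall N, exists2 i, N <= i & odd_block_at c i.
Proof.
move=> odd_d d_le le_d often N.
have [i [Ni ci]] := often (N + N0 + K.+1).
have i_eq := divn_eq i K.+1; have i_mod := ltn_pmod i (ltn0Sn K).
set j := i %/ K.+1 in i_eq.
have j_gt0 : 0 < j by rewrite divn_gt0 //; lia.
exists (j * K.+1 + K); first by lia.
rewrite /odd_block_at modnMDl modn_small // (low_track_block_end j_gt0 d_le).
- by rewrite /odd_block eqxx odd_d odd_le_s.
- by move=> l /andP[jl _]; apply: le_d; lia.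
- by exists i; first by apply/andP; split; lia.
Qed.

Lemma no_odd_block c B P d : B <= K.+1 -> 0 < P <= K.+1 -> periodic_from B P c ->
  limsup c d -> ~~ odd d -> d <= s -> forall i, ~~ odd_block_at c i.
Proof.
move=> BK /andP[P_gt0 PK] cP lim even_d d_le i.
have [le_d window] := periodic_limsup P_gt0 cP lim.
case: (leqP i K) => [iK | Ki].
  by rewrite /odd_block_at low_track_first_block // /odd_block ltnn !andbF.
apply/and3P => [[/eqP i_mod odd_x _]]; move: odd_x.
have i_eq : i = i %/ K.+1 * K.+1 + K by rewrite {1}(divn_eq i K.+1) i_mod.
have j_gt0 : 0 < i %/ K.+1 by rewrite divn_gt0.
rewrite i_eq (low_track_block_end j_gt0 d_le) ?(negbTE even_d) //.
  by move=> l /andP[jl _]; apply: le_d; apply: leq_trans BK (leq_trans _ jl); apply: leq_pmull.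
have [l /andP[jl lj] cl] := window (i %/ K.+1 * K.+1) (leq_trans BK (leq_pmull _ j_gt0)).
by exists l => //; rewrite jl mulSnr (leq_trans lj) ?leq_add2l.
Qed.

Definition reduced_color (t c x : nat) : nat :=
  if s < c then c - s else if (k != 0) && odd_block t x then 1 else 0.

Definition reduced_colors (c : nat -> nat) (i : nat) : nat :=
  reduced_color (i %% K.+1) (c i) (low_track c i).

Lemma reduced_color_le t c x : c <= s + k -> reduced_color t c x <= k.
Proof.
rewrite /reduced_color; case: ifP => [_|_ _]; first by lia.
by case: ifP => // /andP[k_gt0 _]; rewrite lt0n.
Qed.

Lemma reduced_color_low t c x : c <= s -> reduced_color t c x = (k != 0) && odd_block t x.
Proof. by rewrite /reduced_color ltnNge => ->; case: ifP. Qed.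

Lemma reduced_colors_high c d : limsup c d -> s < d -> limsup (reduced_colors c) (d - s).
Proof.
move=> [often [N le_d]] sd; split.
  move=> M; have [i [Mi ci]] := often M.
  by exists i; split=> //; rewrite /reduced_colors /reduced_color ci sd.
exists N => i Ni; rewrite /reduced_colors /reduced_color.
case: ifP => [_|_]; first by have := le_d i Ni; lia.
by case: ifP => _; lia.
Qed.

Lemma reduced_colors_sound c d e : limsup c d -> limsup (reduced_colors c) e -> ~~ odd e ->
  (k == 0 -> forall i, ~~ odd_block_at c i) -> ~~ odd d.
Proof.
move=> lim_c lim_g even_e alive.
case: (ltnP s d) => [sd | ds].
  rewrite (limsup_uniq lim_g (reduced_colors_high lim_c sd)) oddB ?(ltnW sd) // in even_e.
  by rewrite (negbTE even_s) addbF in even_e.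
apply/negP => odd_d; have [often [N le_d]] := lim_c.
have blocks := odd_block_often odd_d ds le_d often.
case: (eqVneq k 0) => [/eqP k0 | k_neq0].
  by have [i _ ob] := blocks 0; move: (alive k0 i); rewrite ob.
suff lim1 : limsup (reduced_colors c) 1 by rewrite (limsup_uniq lim_g lim1) in even_e.
have g_low i : N <= i -> reduced_colors c i = odd_block_at c i.
  by move=> Ni; rewrite /reduced_colors reduced_color_low ?k_neq0 // (leq_trans (le_d i Ni)).
split; last by exists N => i Ni; rewrite g_low //; case: odd_block_at.
move=> M; have [i Mi ob] := blocks (M + N).
by exists i; split; [lia | rewrite g_low ?ob //; lia].
Qed.

Lemma reduced_colors_complete c B P d : B <= K.+1 -> 0 < P <= K.+1 ->
  periodic_from B P c -> limsup c d -> ~~ odd d -> (k == 0 -> d <= s) ->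
  (k == 0 -> forall i, ~~ odd_block_at c i) /\
  exists2 e, ~~ odd e & limsup (reduced_colors c) e.
Proof.
move=> BK PK cP lim_c even_d k0_ds.
case: (ltnP s d) => [sd | ds].
  split=> [k0|]; first by have := k0_ds k0; lia.
  exists (d - s); last exact: reduced_colors_high.
  by rewrite oddB ?(ltnW sd) // (negbTE even_d) (negbTE even_s).
have alive := no_odd_block BK PK cP lim_c even_d ds.
split=> [_|]; first exact: alive.
have [le_d _] := periodic_limsup (proj1 (andP PK)) cP lim_c.
have g0 i : B <= i -> reduced_colors c i = 0.
  move=> Bi; rewrite /reduced_colors reduced_color_low ?(leq_trans (le_d i Bi)) //.
  by move: (alive i); rewrite /odd_block_at => /negbTE ->; rewrite andbF.
exists 0 => //; split; last by exists B => i Bi; rewrite g0.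
by move=> N; exists (N + B); rewrite g0 ?leq_addl ?leq_addr.
Qed.
End Tracker.

Definition colors (Sigma : finType) (m : nat) (A : parity_aut Sigma m)
  (r : nat -> A) (i : nat) : nat := pa_color A (r i).
Arguments colors {Sigma m} A r i.

Section Reduction.
Variables (Sigma : finType) (m : nat) (A : parity_aut Sigma m) (q0 : A) (K h k : nat).
Local Notation s := (h + odd h).

Definition reduced_state : finType := ('I_K.+1 * A * 'I_h.+2)%type.

Definition reduced_dead (st : reduced_state) : bool := (k == 0) && odd_block K h st.1.1 st.2.

Definition reduced_next (st : reduced_state) (q' : A) : reduced_state :=
  (ordS st.1.1, q', inord (next_low K h st.1.1 st.2 (pa_color A q'))).

Definition reduced_delta (st : reduced_state) (a : Sigma) : {set reduced_state} :=
  if [pick q' in pa_delta A st.1.2 a] is Some q' then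
    if reduced_dead st then set0 else [set reduced_next st q']
  else set0.

Definition reduced_aut : parity_aut Sigma k.+1 :=
  @ParityAut Sigma k.+1 reduced_state [set (ord0, q0, ord_max)] reduced_delta
    (fun st => inord (reduced_color K h k st.1.1 (pa_color A st.1.2) st.2)).

Definition lift_run (r : nat -> A) (i : nat) : reduced_state :=
  (inord (i %% K.+1), r i, inord (low_track K h (colors A r) i)).

Lemma reduced_deterministic : deterministic reduced_aut.
Proof.
split=> [|st a]; first by rewrite cards1.
rewrite /= /reduced_delta; case: pickP => [q' _|_]; last by rewrite cards0.
by case: ifP; rewrite ?cards0 ?cards1.
Qed.

Lemma card_reduced_state : #|reduced_state| = K.+1 * #|A| * h.+2.
Proof. by rewrite !card_prod !card_ord. Qed.

Lemma mem_reduced_delta st a st' : st' \in reduced_delta st a ->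
  [/\ ~~ reduced_dead st, st'.1.2 \in pa_delta A st.1.2 a & st' = reduced_next st st'.1.2].
Proof.
rewrite /reduced_delta; case: pickP => [q' q'_succ|_]; last by rewrite inE.
by case: ifP => [_|_ /set1P ->]; rewrite ?inE.
Qed.

Lemma lift_run0 (r : nat -> A) : r 0 = q0 -> lift_run r 0 = (ord0, q0, ord_max).
Proof. by move=> r0; rewrite /lift_run r0; congr (_, _, _); apply: val_inj; rewrite /= inordK. Qed.

Lemma lift_run_next (r : nat -> A) i : reduced_next (lift_run r i) (r i.+1) = lift_run r i.+1.
Proof.
rewrite /lift_run /reduced_next /=; congr (_, _, _); apply: val_inj => /=.
  by rewrite !inordK ?ltn_pmod // [in RHS](divn_eq i K.+1) -addnS modnMDl.
by rewrite (inordK (ltn_pmod _ (ltn0Sn K))) (inordK (low_track_lt _ _ _ _)).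
Qed.

Lemma lift_run_dead (r : nat -> A) i :
  reduced_dead (lift_run r i) = (k == 0) && odd_block_at K h (colors A r) i.
Proof.
by rewrite /reduced_dead /= (inordK (ltn_pmod _ (ltn0Sn K))) (inordK (low_track_lt _ _ _ _)).
Qed.

Lemma colors_lift_run (r : nat -> A) : m <= h + k.+1 ->
  colors reduced_aut (lift_run r) =1 reduced_colors K h k (colors A r).
Proof.
move=> m_le i; rewrite /colors /= (inordK (ltn_pmod _ (ltn0Sn K))) (inordK (low_track_lt _ _ _ _)).
by rewrite inordK // ltnS reduced_color_le //; have := ltn_ord (pa_color A (r i)); lia.
Qed.

Lemma reduced_run_proj w r' : q0 \in pa_init A -> is_run reduced_aut w r' ->
  exists r, [/\ is_run A w r, r' =1 lift_run r &
                k == 0 -> forall i, ~~ odd_block_at K h (colors A r) i].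
Proof.
move=> q0_init [/set1P r'0 r'S]; pose r i := (r' i).1.2.
have r'_lift : r' =1 lift_run r.
  elim=> [|i IH]; first by rewrite lift_run0 // /r r'0.
  by have [_ _ ->] := mem_reduced_delta (r'S i); rewrite IH lift_run_next.
exists r; split=> //; first split=> [|i]; first by rewrite /r r'0.
  by have [] := mem_reduced_delta (r'S i).
move=> k0 i; have [] := mem_reduced_delta (r'S i).
by rewrite r'_lift lift_run_dead k0.
Qed.

Lemma reduced_run_lift w r : deterministic A -> pa_init A = [set q0] -> is_run A w r ->
  (k == 0 -> forall i, ~~ odd_block_at K h (colors A r) i) -> is_run reduced_aut w (lift_run r).
Proof.
move=> A_det A_init [r0 run] alive; split.
  by move: r0; rewrite A_init => /set1P r0; rewrite lift_run0 // set11.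
move=> i; rewrite /= /reduced_delta /= (deterministic_pick A_det (run i)) lift_run_dead.
case: (eqVneq k 0) => [/eqP k0 | _] /=; last by rewrite lift_run_next set11.
by rewrite (negbTE (alive k0 i)) lift_run_next set11.
Qed.

Lemma reduced_sound w : q0 \in pa_init A -> m <= h + k.+1 ->
  lang reduced_aut w -> lang A w.
Proof.
move=> q0_init m_le [r' [run' [e [even_e lim_e]]]].
have [r [run r'_lift alive]] := reduced_run_proj q0_init run'.
have [d lim_d] := limsup_exists (fun i => ltn_ord (pa_color A (r i))).
exists r; split=> //; exists d; split=> //.
apply: (reduced_colors_sound lim_d _ even_e alive).
by apply: eq_limsup lim_e => i /=; rewrite r'_lift; apply: colors_lift_run.
Qed.

Lemma reduced_complete u v w : deterministic A -> pa_init A = [set q0] -> m <= h + k.+1 ->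
  size (u ++ v) * #|A| <= K -> 0 < size v -> is_lasso_word u v w ->
  lang A w -> lang reduced_aut w.
Proof.
move=> A_det A_init m_le uv_le v_gt0 lasso [r [run [d [even_d lim_d]]]].
have [P /andP[P_gt0 P_le] rP] := det_run_lasso_periodic A_det run v_gt0 lasso.
have cP : periodic_from (size (u ++ v) * #|A|) P (colors A r) by move=> i Bi; rewrite /colors rP.
have d_le : k == 0 -> d <= s.
  have [i [_ <-]] := lim_d.1 0; have := ltn_ord (pa_color A (r i)).
  by move=> ci /eqP k0; rewrite k0 in m_le; lia.
have P_le' : 0 < P <= K.+1 by rewrite P_gt0 (leq_trans P_le) ?(leqW uv_le).
have [alive [e even_e lim_e]] := reduced_colors_complete (leqW uv_le) P_le' cP lim_d even_d d_le.
exists (lift_run r); split; first exact: reduced_run_lift.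
by exists e; split=> //; apply: eq_limsup lim_e => i; rewrite -colors_lift_run.
Qed.

End Reduction.

Theorem theorem6 (Sigma : finType) (m : nat) (A : parity_aut Sigma m)
  (n m' : nat) :
  deterministic A -> 0 < m' < m ->
  exists A' : parity_aut Sigma m',
    deterministic A' /\
    #|pa_state A'| = ((n * #|pa_state A| + 1) * #|pa_state A| * (m - m' + 2))%N /\
    (forall w, lang A' w -> lang A w) /\
    (forall w, lasso_lang n (lang A') w <-> lasso_lang n (lang A) w).
Proof.
move=> A_det /andP[]; case: m' => [//|k] _ k_lt_m.
have [q0 A_init] : exists q0, pa_init A = [set q0] by apply/cards1P; rewrite A_det.1.
have m_le : m <= (m - k.+1) + k.+1 by rewrite subnK ?(ltnW k_lt_m).
pose A' := reduced_aut q0 (n * #|A|) (m - k.+1) k.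
have sound w : lang A' w -> lang A w by apply: reduced_sound m_le; rewrite A_init set11.
exists A'; split; first exact: reduced_deterministic.
split; first by rewrite card_reduced_state addn1 addn2.
split=> // w; split=> [[/sound Lw lasso] | [Lw [u [v [v_gt0 [size_uv lasso]]]]]]; first by [].
split; last by exists u, v.
have uv_le : size (u ++ v) * #|A| <= n * #|A| by rewrite size_uv.
exact: (reduced_complete A_det A_init m_le uv_le v_gt0 lasso).
Qed.
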